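(* Let $T^4=\mathbb{R}^4/\mathbb{Z}^4$, and let $G$ be a constant Riemannian metric and $B$ a constant real 2-form on $T^4$ with all components $G_{IJ},B_{IJ}\in\mathbb{Q}$ (i.e. the $\mathcal N=(1,1)$ SCFT for $(T^4;G,B)$ is rational). Let $I$ be a polarizable constant complex structure on $T^4$ with which $G$ is compatible and such that the Hodge $(2,0)$ component of the class of $B$ (with respect to $I$) vanishes. Then there exists a primitive subgroup $\Gamma_f\subset H_1(T^4;\mathbb{Z})$ of rank $2$ such that the T-dual along $\Gamma_f$ has a geometric SYZ-mirror; that is, $\omega|_{\Gamma_f\otimes\mathbb{R}}=0$ and $B|_{\Gamma_f\otimes\mathbb{R}}=0$.
   Context: Coordinates $X^I$ normalized so that $H_1(T^4;\mathbb{Z})=\mathbb{Z}^4$ and $2\pi\sqrt{\alpha'}=1$; $G=G_{IJ}dX^I\otimes dX^J$, $B=\frac12B_{IJ}dX^I\wedge dX^J$. Compatible: $G(Iu,Iv)=G(u,v)$. Polarizable: some $\psi\in H^2(T^4;\mathbb{Z})\cap H^{1,1}$ has $\psi(I\cdot,\cdot)$ positive definite. Kähler form: $\omega=\frac12\omega_{IJ}dX^I\wedge dX^J$, $\omega_{IJ}=I^K{}_IG_{KJ}$. For a rank-2 primitive $\Gamma_f\subset H_1(T^4;\mathbb{Z})$ (so $H_1(T^4;\mathbb{Z})=\Gamma_f\oplus\Gamma_b$ for some $\Gamma_b$), string-theoretic T-duality along the fibers $\Gamma_f\otimes\mathbb{R}/\Gamma_f$ maps the SCFT with its $\mathcal N=(2,2)$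 structure defined by $I$ to another torus SCFT; one says $(T^4;G,B;I)$ has a geometric SYZ-mirror along $\Gamma_f$ if the mirror $\mathcal N=(2,2)$ currents come from a complex structure on the T-dual torus. By a known result this holds iff $\omega$ and $B$ restrict to zero on $\Gamma_f\otimes\mathbb{R}$ (2-forms evaluated on pairs of vectors in $\Gamma_f\otimes\mathbb{R}$). *)

From HB Require Import structures.
From mathcomp Require Import all_boot all_order all_algebra.
From mathcomp Require Import reals.
Set Implicit Arguments. Unset Strict Implicit. Unset Printing Implicit Defensive.
Import Order.TTheory GRing.Theory Num.Theory.
Local Open Scope ring_scope.

(* Conventions: coordinates X^1..X^4 indexed by 'I_4; tangent vectors are
   column vectors 'cV[R]_4; a constant bilinear form with components A_{IJ}
   is the matrix A, evaluated as A(u,v) = A_{IJ} u^I v^J = u^T A v.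
   The 2-form B = 1/2 B_{IJ} dX^I /\ dX^J evaluates as B(u,v) = u^T B v.
   A complex structure I is a matrix with (I u)^K = I^K_L u^L, I i j = I^i_j. *)

Definition bil (R : realType) (A : 'M[R]_4) (u v : 'cV[R]_4) : R :=
  (u^T *m A *m v) 0 0.

Definition is_metric (R : realType) (G : 'M[R]_4) : Prop :=
  G^T = G /\ forall u : 'cV[R]_4, u != 0 -> 0 < bil G u u.

Definition is_2form (R : realType) (B : 'M[R]_4) : Prop := B^T = - B.

Definition is_cplx_structure (R : realType) (I : 'M[R]_4) : Prop :=
  I *m I = - 1%:M.

Definition compatible (R : realType) (G I : 'M[R]_4) : Prop :=
  forall u v, bil G (I *m u) (I *m v) = bil G u v.

(* The (2,0) Hodge component of a real 2-form A w.r.t. I vanishes: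
   A^{2,0}(u,v) = A(u^{1,0}, v^{1,0}) with u^{1,0} = (u - i I u)/2, and
   4 A(u - iIu, v - iIv) = [A(u,v) - A(Iu,Iv)] - i [A(Iu,v) + A(u,Iv)];
   we require both real and imaginary parts to vanish. *)
Definition hodge20_zero (R : realType) (I A : 'M[R]_4) : Prop :=
  forall u v,
    bil A u v - bil A (I *m u) (I *m v) = 0 /\
    bil A (I *m u) v + bil A u (I *m v) = 0.

Definition int_mx (R : realType) (m n : nat) (M : 'M[int]_(m, n)) : 'M[R]_(m, n) :=
  map_mx (fun z : int => z%:~R) M.

(* Polarizable: some integral 2-form psi (class in H^2(T^4;Z)) of Hodge type (1,1)
   with psi(I.,.) positive definite. *)
Definition polarizable (R : realType) (I : 'M[R]_4) : Prop :=
  exists psi : 'M[int]_4,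
    is_2form (int_mx R psi) /\ hodge20_zero I (int_mx R psi) /\
    (forall u v, bil (int_mx R psi) (I *m u) v = bil (int_mx R psi) (I *m v) u) /\
    (forall u : 'cV[R]_4, u != 0 -> 0 < bil (int_mx R psi) (I *m u) u).

(* Kähler form: omega_{IJ} = I^K_I G_{KJ}, i.e. omega = I^T G. *)
Definition kahler_form (R : realType) (G I : 'M[R]_4) : 'M[R]_4 := I^T *m G.

Definition rational_mx (R : realType) (A : 'M[R]_4) : Prop :=
  forall i j, exists q : rat, A i j = ratr q.

Definition vanishes_on_span (R : realType) (A : 'M[R]_4) (f1 f2 : 'cV[R]_4) : Prop :=
  forall a b c d : R, bil A (a *: f1 + b *: f2) (c *: f1 + d *: f2) = 0.

From HB Require Import structures.
From mathcomp Require Import all_boot all_order all_algebra.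
From mathcomp Require Import reals.
From mathcomp Require Import ring lra.
Import Order.TTheory GRing.Theory Num.Theory.
Set Implicit Arguments. Unset Strict Implicit. Unset Printing Implicit Defensive.
Local Open Scope ring_scope.

(* Scale G and B to integral matrices and let Q = adj(G) B and P = det(G) adj(G) psi:
   integral endomorphisms which are G-antiselfadjoint and commute with I.  If K is
   integral, G-selfadjoint, commutes with I and QK is G-antiselfadjoint, then
   omega(f, Kf) and B(f, Kf) vanish for every f, so when K is not scalar some integral
   f, Kf span a plane isotropic for both forms, and its saturation is Gamma_f.  This
   applies to K = Q^2, then to P^2 (if Q = 0) or PQ + QP.  If all of these are scalar,
   positivity of psi(I., .) forces I to be a multiple of P (if Q = 0) or of Q, so that
   omega and B are multiples of a single integral 2-form, which has an integral
   isotropic plane. *)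

Section BilinearForms.
Variable R : realType.
Implicit Types (A K : 'M[R]_4) (u v : 'cV[R]_4).

Lemma int_mxM m n p (A : 'M[int]_(m, n)) (B : 'M[int]_(n, p)) :
  int_mx R (A *m B) = int_mx R A *m int_mx R B.
Proof. exact: map_mxM. Qed.

Lemma int_mxD m n (A B : 'M[int]_(m, n)) :
  int_mx R (A + B) = int_mx R A + int_mx R B.
Proof. exact: map_mxD. Qed.

Lemma int_mxZ m n (a : int) (X : 'M[int]_(m, n)) :
  int_mx R (a *: X) = a%:~R *: int_mx R X.
Proof. by apply/matrixP => i j; rewrite !mxE rmorphM. Qed.

Lemma int_mx_col m n (j : 'I_n) (X : 'M[int]_(m, n)) :
  int_mx R (col j X) = col j (int_mx R X).
Proof. exact: map_col. Qed.

Lemma int_mx_scalar n (a : int) : int_mx R (a%:M : 'M_n) = (a%:~R)%:M.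
Proof. exact: map_scalar_mx. Qed.

Lemma int_mx_eq0 m n (X : 'M[int]_(m, n)) : (int_mx R X == 0) = (X == 0).
Proof.
apply/eqP/eqP => [/matrixP X0|->]; last by rewrite /int_mx map_mx0.
by apply/matrixP => i j; move: (X0 i j); rewrite !mxE => /eqP; rewrite intr_eq0 => /eqP.
Qed.

Lemma bilDl A u1 u2 v : bil A (u1 + u2) v = bil A u1 v + bil A u2 v.
Proof. by rewrite /bil linearD /= !mulmxDl mxE. Qed.

Lemma bilDr A u v1 v2 : bil A u (v1 + v2) = bil A u v1 + bil A u v2.
Proof. by rewrite /bil !mulmxDr mxE. Qed.

Lemma bilZl A a u v : bil A (a *: u) v = a * bil A u v.
Proof. by rewrite /bil linearZ /= -!scalemxAl mxE. Qed.

Lemma bilZr A a u v : bil A u (a *: v) = a * bil A u v.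
Proof. by rewrite /bil -!scalemxAr mxE. Qed.

Lemma bilNr A u v : bil A u (- v) = - bil A u v.
Proof. by rewrite /bil mulmxN mxE. Qed.

Lemma bil0r A u : bil A u 0 = 0.
Proof. by rewrite /bil mulmx0 mxE. Qed.

Lemma bilmxZ A a u v : bil (a *: A) u v = a * bil A u v.
Proof. by rewrite /bil -scalemxAr -scalemxAl mxE. Qed.

Lemma bilmxN A u v : bil (- A) u v = - bil A u v.
Proof. by rewrite /bil mulmxN mulNmx mxE. Qed.

Lemma bilmxD A K u v : bil (A + K) u v = bil A u v + bil K u v.
Proof. by rewrite /bil mulmxDr mulmxDl mxE. Qed.

Lemma bilmxB A K u v : bil (A - K) u v = bil A u v - bil K u v.
Proof. by rewrite bilmxD bilmxN. Qed.

Lemma bil_mulmxr A K u v : bil A u (K *m v) = bil (A *m K) u v.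
Proof. by rewrite /bil !mulmxA. Qed.

Lemma bil_mulmxl A K u v : bil A (K *m u) v = bil (K^T *m A) u v.
Proof. by rewrite /bil trmx_mul !mulmxA. Qed.

Lemma bil_trmx A u v : bil A u v = bil A^T v u.
Proof.
have -> : bil A u v = ((u^T *m A *m v)^T) 0 0 by rewrite /bil [RHS]mxE.
by rewrite /bil !trmx_mul trmxK mulmxA.
Qed.

Lemma bil_alt A u : is_2form A -> bil A u u = 0.
Proof.
move=> hA; have := bil_trmx A u u; rewrite hA bilmxN; lra.
Qed.

Lemma bil_antisym A u v : is_2form A -> bil A v u = - bil A u v.
Proof. by move=> hA; rewrite bil_trmx hA bilmxN. Qed.

Lemma bil_delta A i j : bil A (delta_mx i 0) (delta_mx j 0) = A i j.
Proof. by rewrite /bil -colE trmx_delta -rowE !mxE. Qed.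

Lemma bil_delta_mx (i j : 'I_4) u v : bil (delta_mx i j) u v = u i 0 * v j 0.
Proof.
rewrite /bil -(mul_delta_mx (0 : 'I_1)) mulmxA -colE -mulmxA -rowE.
by rewrite mxE big_ord1 !mxE.
Qed.

Lemma bil_inj A K : (forall u v, bil A u v = bil K u v) -> A = K.
Proof. by move=> h; apply/matrixP => i j; rewrite -!bil_delta h. Qed.

Lemma gram_entry n (X : 'M[R]_(4, n)) A (a b : 'I_n) :
  (X^T *m A *m X) a b = bil A (col a X) (col b X).
Proof.
have -> : (X^T *m A *m X) a b =
    ((delta_mx 0 a : 'rV[R]_n) *m (X^T *m A *m X) *m (delta_mx b 0 : 'cV[R]_n)) 0 0.
  by rewrite -rowE -colE !mxE.
by rewrite /bil !colE trmx_mul trmx_delta !mulmxA.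
Qed.

End BilinearForms.

Definition plucker (f g : 'cV[int]_4) (i j : 'I_4) : int :=
  f i 0 * g j 0 - f j 0 * g i 0.

Section Planes.
Variable R : realType.

Lemma vanishes_on_span_2form (A : 'M[R]_4) f1 f2 :
  is_2form A -> bil A f1 f2 = 0 -> vanishes_on_span A f1 f2.
Proof.
move=> hA h a b c d.
rewrite !(bilDl, bilDr, bilZl, bilZr) !bil_alt // (bil_antisym f1 f2 hA) h.
by rewrite !(mulr0, oppr0, addr0).
Qed.

Lemma bil_cols_mulmx (X : 'M[R]_(4, 2)) (C : 'M[R]_2) (A : 'M[R]_4) :
  is_2form A ->
  bil A (col 0 (X *m C)) (col 1 (X *m C)) =
    (C 0 0 * C 1 1 - C 1 0 * C 0 1) * bil A (col 0 X) (col 1 X).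
Proof.
move=> hA; rewrite -[LHS]gram_entry.
have -> : (X *m C)^T *m A *m (X *m C) = C^T *m (X^T *m A *m X) *m C.
  by rewrite trmx_mul !mulmxA.
rewrite !mxE !big_ord_recl !big_ord0 !mxE !big_ord_recl !big_ord0 !gram_entry.
have -> : lift ord0 ord0 = 1 :> 'I_2 by apply: val_inj.
rewrite !bil_alt // (bil_antisym (col 0 X) (col 1 X) hA) !mxE.
ring.
Qed.

Lemma bil_plucker (f g : 'cV[int]_4) (i j : 'I_4) :
  bil (delta_mx i j - delta_mx j i) (int_mx R f) (int_mx R g) = (plucker f g i j)%:~R.
Proof. by rewrite bilmxB !bil_delta_mx !mxE rmorphB !rmorphM. Qed.

Lemma saturate_independent_pair (f g : 'cV[int]_4) (i j : 'I_4) :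
  plucker f g i j != 0 ->
  exists F : 'M[int]_4, \det F \is a GRing.unit /\
    forall A : 'M[R]_4, is_2form A -> bil A (int_mx R f) (int_mx R g) = 0 ->
      bil A (int_mx R (col 0 F)) (int_mx R (col 1 F)) = 0.
Proof.
(* With [f g] = L D C in Smith normal form, every 2-form takes on (f, g) the value it
   takes on the first two columns of L times c = det C * d_0 * d_1. *)
move=> hfg.
pose M : 'M[int]_(4, 2) := \matrix_(a, b) (if b == 0 then f a 0 else g a 0).
have [L uL [C _ [d _ defM]]] := int_Smith_normal_form M.
set D := \matrix_(_, _) _ in defM.
have colD (k : 'I_2) : col k (L *m D) = d`_k *: col (widen_ord (isT : (2 <= 4)%N) k) L.
  rewrite !colE -mulmxA scalemxAr -colE; congr (_ *m _).
  apply/matrixP => a b; rewrite !mxE (ord1 b) andbT.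
  by case: k => [[|[|//]] ?]; case: a => [[|[|[|[|//]]]] ?]; rewrite /= ?mulr1 ?mulr0.
pose c := (C 0 0 * C 1 1 - C 1 0 * C 0 1) * d`_0 * d`_1.
have area (A : 'M[R]_4) : is_2form A -> bil A (int_mx R f) (int_mx R g) =
    c%:~R * bil A (int_mx R (col 0 L)) (int_mx R (col 1 L)).
  move=> hA.
  have -> : int_mx R f = col 0 (int_mx R (L *m D) *m int_mx R C).
    by rewrite -int_mxM -defM; apply/matrixP => a b; rewrite !mxE (ord1 b).
  have -> : int_mx R g = col 1 (int_mx R (L *m D) *m int_mx R C).
    by rewrite -int_mxM -defM; apply/matrixP => a b; rewrite !mxE (ord1 b).
  have w0 : widen_ord (isT : (2 <= 4)%N) 0 = 0 by apply: val_inj.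
  have w1 : widen_ord (isT : (2 <= 4)%N) 1 = 1 by apply: val_inj.
  rewrite bil_cols_mulmx // -!int_mx_col !colD w0 w1 !int_mxZ bilZl bilZr !mxE.
  rewrite /c !rmorphM !rmorphB !rmorphM /=; ring.
have c_neq0 : c%:~R != 0 :> R.
  apply: contra_neq hfg => c0.
  have E2 : is_2form (delta_mx i j - delta_mx j i : 'M[R]_4).
    by rewrite /is_2form linearB /= !trmx_delta opprB.
  by move: (area _ E2); rewrite c0 mul0r bil_plucker => /eqP; rewrite intr_eq0 => /eqP.
exists L; split; first by rewrite -unitmxE.
by move=> A hA /eqP; rewrite area // mulf_eq0 (negbTE c_neq0) => /eqP.
Qed.

End Planes.

Lemma nonscalar_independent_image (K : 'M[int]_4) : ~~ is_scalar_mx K ->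
  exists (f : 'cV[int]_4) (i j : 'I_4), plucker f (K *m f) i j != 0.
Proof.
move=> hK.
have [[a b] /andP [/= hab hKab] | diagK] :=
  pickP (fun p : 'I_4 * 'I_4 => (p.1 != p.2) && (K p.1 p.2 != 0)).
  exists (delta_mx b 0), b, a.
  by rewrite /plucker -colE !mxE !eqxx (negbTE hab) /= mul1r mul0r subr0.
have offK (a b : 'I_4) : a != b -> K a b = 0.
  by move=> hab; move: (diagK (a, b)); rewrite /= hab => /negbFE/eqP.
have [c hc | constK] := pickP (fun c : 'I_4 => K c c != K 0 0).
  have c_neq0 : c != 0 by apply: contraNneq hc => ->.
  exists (delta_mx 0 0 + delta_mx c 0), 0, c.
  rewrite mulmxDr -!colE /plucker !mxE !eqxx !andbT [0 == c]eq_sym (negbTE c_neq0).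
  rewrite (offK 0 c) 1?eq_sym // (offK c 0) //.
  by rewrite !(addr0, add0r, mul1r) eq_sym subr_eq0.
case/negP: hK; apply/is_scalar_mxP; exists (K 0 0); apply/matrixP => a b.
rewrite mxE; have [<-|hab] := eqVneq a b; last by rewrite (offK a b hab).
by move: (constK a) => /negbFE/eqP ->; rewrite mulr1n.
Qed.

Section IsotropicPairs.
Variable R : realType.

Definition int_isotropic_pair (W B : 'M[R]_4) : Prop :=
  exists (f g : 'cV[int]_4) (i j : 'I_4), plucker f g i j != 0 /\
    bil W (int_mx R f) (int_mx R g) = 0 /\ bil B (int_mx R f) (int_mx R g) = 0.

Lemma int_isotropic_pairZ (W B : 'M[R]_4) a b : a != 0 -> b != 0 ->
  int_isotropic_pair (a *: W) (b *: B) -> int_isotropic_pair W B.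
Proof.
move=> ha hb [f [g [i [j [hfg []]]]]]; rewrite !bilmxZ => /eqP hW /eqP hB.
exists f, g, i, j; split => //.
by move: hW hB; rewrite !mulf_eq0 (negbTE ha) (negbTE hb) => /eqP -> /eqP ->.
Qed.

Lemma int_form_isotropic_pair (A : 'M[int]_4) :
  exists (f g : 'cV[int]_4) (i j : 'I_4), plucker f g i j != 0 /\
    bil (int_mx R A) (int_mx R f) (int_mx R g) = 0.
Proof.
have [A01|A01] := eqVneq (A 0 1) 0.
  exists (delta_mx 0 0), (delta_mx 1 0), 0, 1.
  by rewrite /plucker !mxE /int_mx !map_delta_mx bil_delta mxE A01.
exists (delta_mx 0 0), (A 0 1 *: delta_mx 2 0 - A 0 2 *: delta_mx 1 0), 0, 2.
split; first by rewrite /plucker !mxE /= !(mulr0, mulr1, mul1r, mul0r, subr0).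
rewrite /int_mx map_mxB !map_mxZ !map_delta_mx bilDr bilNr !bilZr !bil_delta !mxE.
by rewrite mulrC subrr.
Qed.

Lemma isotropic_pair_of_proportional (W B : 'M[R]_4) (A : 'M[int]_4) c1 c2 :
  W = c1 *: int_mx R A -> B = c2 *: int_mx R A -> int_isotropic_pair W B.
Proof.
move=> -> ->; have [f [g [i [j [hfg hA]]]]] := int_form_isotropic_pair A.
by exists f, g, i, j; rewrite !bilmxZ hA !mulr0.
Qed.

Lemma primitive_plane_of_isotropic_pair (W B : 'M[R]_4) :
  is_2form W -> is_2form B -> int_isotropic_pair W B ->
  exists F : 'M[int]_4, \det F \is a GRing.unit /\
    vanishes_on_span W (int_mx R (col 0 F)) (int_mx R (col 1 F)) /\
    vanishes_on_span B (int_mx R (col 0 F)) (int_mx R (col 1 F)).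
Proof.
move=> hW hB [f [g [i [j [hfg [hWfg hBfg]]]]]].
have [F [uF satF]] := saturate_independent_pair R hfg.
by exists F; split => //; split; apply: vanishes_on_span_2form => //; apply: satF.
Qed.

End IsotropicPairs.

Section Eigenvectors.
Variable F : comPzRingType.

Lemma exists_mulmx_neq0 m n (X : 'M[F]_(m, n)) : X != 0 -> exists v : 'cV[F]_n, X *m v != 0.
Proof.
move=> X_neq0; have [j hj|X0] := pickP (fun j : 'I_n => X *m (delta_mx j 0 : 'cV[F]_n) != 0).
  by exists (delta_mx j 0).
case/negP: X_neq0; apply/eqP/matrixP => i j.
by move: (X0 j) => /negbFE/eqP/matrixP/(_ i 0); rewrite -colE !mxE.
Qed.

Lemma eigenvector_of_sq_scalar n (X : 'M[F]_n) s :
  X *m X = (s * s)%:M -> X != s%:M ->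
  exists w : 'cV[F]_n, w != 0 /\ X *m w = - s *: w.
Proof.
move=> XX Xs; have [v hv] : exists v : 'cV[F]_n, (X - s%:M) *m v != 0.
  by apply: exists_mulmx_neq0; rewrite subr_eq0.
exists ((X - s%:M) *m v); split => //; apply/eqP.
rewrite -subr_eq0 scaleNr opprK -mul_scalar_mx -mulmxDl mulmxA.
rewrite mulmxDl !mulmxBr XX scalar_mxC -scalar_mxM.
by rewrite addrC addrA subrK subrr mul0mx.
Qed.

End Eigenvectors.

Section Adjoints.
Variables (R : realType) (G : 'M[R]_4).
Implicit Types (T X Y Z : 'M[R]_4) (u v : 'cV[R]_4).

Definition antiselfadj X := X^T *m G = - (G *m X).
Definition selfadj X := X^T *m G = G *m X.

Lemma selfadj_mul X Y :
  antiselfadj X -> antiselfadj Y -> X *m Y = Y *m X -> selfadj (X *m Y).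
Proof.
rewrite /antiselfadj /selfadj => hX hY XY.
by rewrite trmx_mul -mulmxA hX mulmxN [in LHS]mulmxA hY mulNmx opprK -mulmxA -XY.
Qed.

Lemma antiselfadj_mul X Z :
  antiselfadj X -> selfadj Z -> X *m Z = Z *m X -> antiselfadj (X *m Z).
Proof.
rewrite /antiselfadj /selfadj => hX hZ XZ.
by rewrite trmx_mul -mulmxA hX mulmxN [in LHS]mulmxA hZ -mulmxA -XZ.
Qed.

Lemma antiselfadj_conj X Y : antiselfadj X -> antiselfadj Y -> antiselfadj (X *m Y *m X).
Proof.
rewrite /antiselfadj => hX hY.
rewrite !trmx_mul -!mulmxA hX !mulmxN [Y^T *m (G *m _)]mulmxA hY !mulNmx !mulmxN opprK.
by rewrite !mulmxA hX !mulNmx.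
Qed.

Lemma selfadj_anticomm X Y : antiselfadj X -> antiselfadj Y -> selfadj (X *m Y + Y *m X).
Proof.
rewrite /antiselfadj /selfadj => hX hY.
rewrite linearD /= !trmx_mul !mulmxDl -!mulmxA hX hY !mulmxN !mulmxA hX hY.
by rewrite !mulNmx !opprK mulmxDr addrC !mulmxA.
Qed.

Lemma antiselfadjD X Y : antiselfadj X -> antiselfadj Y -> antiselfadj (X + Y).
Proof. by rewrite /antiselfadj => hX hY; rewrite linearD /= mulmxDl hX hY mulmxDr opprD. Qed.

Lemma antiselfadjZ a X : antiselfadj X -> antiselfadj (a *: X).
Proof. by rewrite /antiselfadj => hX; rewrite linearZ /= -scalemxAl hX -scalemxAr scalerN. Qed.

Lemma antiselfadj0 : antiselfadj 0.
Proof. by rewrite /antiselfadj linear0 mul0mx mulmx0 oppr0. Qed.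

Lemma selfadj_bil X u v : selfadj X -> bil G (X *m u) v = bil G u (X *m v).
Proof. by move=> hX; rewrite bil_mulmxl hX bil_mulmxr. Qed.

Hypothesis G_sym : G^T = G.
Hypothesis G_pos : forall u, u != 0 -> 0 < bil G u u.

Lemma bilG_sym u v : bil G u v = bil G v u.
Proof. by rewrite bil_trmx G_sym. Qed.

Lemma antiselfadj_bil_alt X u : antiselfadj X -> bil (G *m X) u u = 0.
Proof. by move=> hX; apply: bil_alt; rewrite /is_2form trmx_mul G_sym hX. Qed.

Lemma pos_sq_scalar T tau :
  (forall u, u != 0 -> 0 < bil G u (T *m u)) -> T *m T = tau%:M ->
  exists s, 0 < s /\ T = s%:M.
Proof.
move=> T_pos TT.
pose e0 : 'cV[R]_4 := delta_mx 0 0.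
have e0_neq0 : e0 != 0.
  by apply/negP => /eqP/matrixP/(_ 0 0); rewrite !mxE /= => /eqP; rewrite oner_eq0.
have Te0_neq0 : T *m e0 != 0.
  by apply/negP => /eqP Te0; move: (T_pos _ e0_neq0); rewrite Te0 bil0r ltxx.
have tau_gt0 : 0 < tau.
  have := T_pos _ Te0_neq0; rewrite mulmxA TT mul_scalar_mx bilZr bilG_sym.
  by rewrite pmulr_lgt0 // T_pos.
pose s := Num.sqrt tau; have s_gt0 : 0 < s by rewrite sqrtr_gt0.
exists s; split => //; have [//|Ts] := eqVneq T s%:M.
have [w [w_neq0 Tw]] : exists w : 'cV[R]_4, w != 0 /\ T *m w = - s *: w.
  by apply: eigenvector_of_sq_scalar Ts; rewrite TT -expr2 sqr_sqrtr ?ltW.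
have := T_pos _ w_neq0; rewrite Tw bilZr mulNr oppr_gt0 pmulr_rlt0 //.
by rewrite ltNge (ltW (G_pos w_neq0)).
Qed.

Lemma selfadj_anticomm_scalar X Y k c :
  selfadj X -> X != 0 -> X *m X = k%:M -> X *m Y = - (Y *m X) ->
  (forall u, u != 0 -> 0 < bil G u (Y *m u) + c * bil G u (X *m u)) ->
  exists e, e != 0 /\ X = e%:M.
Proof.
move=> sX X_neq0 XX XY YX_pos.
have k_gt0 : 0 < k.
  have [u Xu_neq0] := exists_mulmx_neq0 X_neq0.
  have u_neq0 : u != 0 by apply: contraNneq Xu_neq0 => ->; rewrite mulmx0.
  have := G_pos Xu_neq0; rewrite selfadj_bil // mulmxA XX mul_scalar_mx bilZr.
  by rewrite pmulr_lgt0 // G_pos.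
pose s := Num.sqrt k; have s_gt0 : 0 < s by rewrite sqrtr_gt0.
have ss : s * s = k by rewrite -expr2 sqr_sqrtr // ltW.
have eig_pos (w : 'cV[R]_4) e : w != 0 -> e != 0 -> X *m w = e *: w -> 0 < c * e.
  (* Y exchanges the eigenspaces of X, so G(w, Yw) = 0 on each of them. *)
  move=> w_neq0 e_neq0 Xw.
  have Yw0 : e * bil G w (Y *m w) = 0.
    have : e * bil G w (Y *m w) = - (e * bil G w (Y *m w)).
      rewrite -{1}bilZl -Xw selfadj_bil // mulmxA XY mulNmx -mulmxA Xw.
      by rewrite -scalemxAr bilNr bilZr.
    lra.
  move: (YX_pos _ w_neq0); move/eqP: Yw0; rewrite mulf_eq0 (negbTE e_neq0) /= => /eqP ->.
  by rewrite add0r Xw bilZr mulrA pmulr_lgt0 // G_pos.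
have [-> | Xs] := eqVneq X s%:M; first by exists s; rewrite gt_eqF.
have [-> | Xns] := eqVneq X (- s)%:M; first by exists (- s); rewrite oppr_eq0 gt_eqF.
have [w [w_neq0 Xw]] : exists w : 'cV[R]_4, w != 0 /\ X *m w = - s *: w.
  by apply: eigenvector_of_sq_scalar Xs; rewrite XX ss.
have [w' [w'_neq0 Xw']] : exists w : 'cV[R]_4, w != 0 /\ X *m w = s *: w.
  by rewrite -[s]opprK; apply: eigenvector_of_sq_scalar Xns; rewrite XX mulrNN ss.
have s_neq0 : s != 0 by rewrite gt_eqF.
have Ns_neq0 : - s != 0 by rewrite oppr_eq0.
have cs_gt0 := eig_pos w' s w'_neq0 s_neq0 Xw'.
have := eig_pos w (- s) w_neq0 Ns_neq0 Xw.
by rewrite mulrN oppr_gt0 ltNge (ltW cs_gt0).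
Qed.

End Adjoints.

Section IsotropicPairCore.
Variables (R : realType) (G I : 'M[R]_4) (Pz Qz Sz Bz : 'M[int]_4) (a b : R).
Implicit Types X Y : 'M[R]_4.
Local Notation P := (int_mx R Pz).
Local Notation Q := (int_mx R Qz).
Local Notation B := (int_mx R Bz).
Hypotheses (G_sym : G^T = G) (G_pos : forall u, u != 0 -> 0 < bil G u u).
Hypotheses (I2 : I *m I = - 1%:M) (I_anti : antiselfadj G I).
Hypotheses (P_anti : antiselfadj G P) (Q_anti : antiselfadj G Q).
Hypotheses (IP : I *m P = P *m I) (IQ : I *m Q = Q *m I).
Hypothesis PI_pos : forall u, u != 0 -> 0 < bil G u (- (P *m I) *m u).
Hypotheses (GP : G *m P = a *: int_mx R Sz) (GQ : G *m Q = b *: B).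
Hypothesis b_neq0 : b != 0.

Lemma commI_mulmx X Y : I *m X = X *m I -> I *m Y = Y *m I -> I *m (X *m Y) = X *m Y *m I.
Proof. by move=> IX IY; rewrite mulmxA IX -mulmxA IY mulmxA. Qed.

Lemma mulmxI_mulmxI X Y : I *m Y = Y *m I -> X *m I *m (Y *m I) = - (X *m Y).
Proof. by move=> IY; rewrite mulmxA -(mulmxA X) IY !mulmxA -mulmxA I2 mulmxN mulmx1. Qed.

Lemma isotropic_pair_of_nonscalar (Kz : 'M[int]_4) : ~~ is_scalar_mx Kz ->
  selfadj G (int_mx R Kz) -> I *m int_mx R Kz = int_mx R Kz *m I ->
  antiselfadj G (Q *m int_mx R Kz) -> int_isotropic_pair (I^T *m G) B.
Proof.
move=> Kns K_sym IK QK_anti; have [f [i [j hfKf]]] := nonscalar_independent_image Kns.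
exists f, (Kz *m f), i, j; split => //; rewrite int_mxM !bil_mulmxr; split.
  rewrite I_anti mulNmx bilmxN -mulmxA antiselfadj_bil_alt ?oppr0 //.
  exact: antiselfadj_mul.
apply/eqP; rewrite -(mulrI_eq0 _ (lregP b_neq0)) -bilmxZ scalemxAl -GQ -mulmxA.
by rewrite antiselfadj_bil_alt.
Qed.

Lemma isotropic_pair_of_Q_eq0 : Qz = 0 -> int_isotropic_pair (I^T *m G) B.
Proof.
move=> Q0; have Q0r : Q = 0 by apply/eqP; rewrite int_mx_eq0 Q0.
have B0 : B = 0.
  by move/eqP: GQ; rewrite Q0r mulmx0 eq_sym scaler_eq0 (negbTE b_neq0) => /eqP.
have [PPs|PPns] := boolP (is_scalar_mx (Pz *m Pz)); last first.
  apply: (isotropic_pair_of_nonscalar PPns); rewrite ?int_mxM ?Q0r ?mul0mx.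
  - exact: selfadj_mul.
  - exact: commI_mulmx.
  - exact: antiselfadj0.
have [sig PPsig] := is_scalar_mxP PPs.
have [s [s_gt0 PIs]] : exists s, 0 < s /\ - (P *m I) = s%:M.
  apply: (pos_sq_scalar G_sym G_pos (tau := - sig%:~R)) => //.
  by rewrite mulNmx mulmxN opprK mulmxI_mulmxI // -int_mxM PPsig int_mx_scalar raddfN.
have I_P : I = s^-1 *: P.
  have := congr1 (mulmx^~ I) PIs; rewrite /= mulNmx -mulmxA I2 mulmxN mulmx1 opprK.
  by rewrite mul_scalar_mx => ->; rewrite scalerA mulVf ?gt_eqF // scale1r.
apply: (isotropic_pair_of_proportional (A := Sz) (c1 := - (a / s)) (c2 := 0)).
  by rewrite I_anti I_P -scalemxAr GP scalerA scaleNr mulrC.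
by rewrite B0 scale0r.
Qed.

Lemma I_propto_Q kap c : Q != 0 -> Q *m Q = kap%:M -> P *m Q + Q *m P = c%:M ->
  exists e, e != 0 /\ I = e *: Q.
Proof.
move=> Q_neq0 QQ PQc.
have kap_lt0 : kap < 0.
  have [u Qu_neq0] := exists_mulmx_neq0 Q_neq0.
  have u_neq0 : u != 0 by apply: contraNneq Qu_neq0 => ->; rewrite mulmx0.
  have := G_pos Qu_neq0; rewrite bil_mulmxl Q_anti bilmxN -bil_mulmxr mulmxA QQ.
  by rewrite mul_scalar_mx bilZr -mulNr pmulr_lgt0 ?G_pos // oppr_gt0.
(* P' anticommutes with Q, and P'I + (c/2) QI = - kap (- PI) is G-positive. *)
pose P' := kap *: P - (c / 2) *: Q.
have IP' : I *m P' = P' *m I by rewrite mulmxBr mulmxBl -!scalemxAr -!scalemxAl IP IQ.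
have QP'_anti : Q *m P' + P' *m Q = 0.
  rewrite mulmxBr mulmxBl -!scalemxAr -!scalemxAl addrACA -scalerDr [Q *m P + _]addrC PQc.
  rewrite -opprD -scalerDr QQ -raddfD !scale_scalar_mx -raddfB.
  have -> : kap * c - c / 2 * (kap + kap) = 0 by field.
  exact: raddf0.
have X_sym : selfadj G (Q *m I) by apply: selfadj_mul; rewrite ?IQ.
have XI : Q *m I *m I = - Q by rewrite -mulmxA I2 mulmxN mulmx1.
have X_neq0 : Q *m I != 0.
  by apply: contraNneq Q_neq0 => X0; rewrite -[Q]opprK -XI X0 mul0mx oppr0.
have XX : Q *m I *m (Q *m I) = (- kap)%:M by rewrite mulmxI_mulmxI // QQ raddfN.
have XY : Q *m I *m (P' *m I) = - (P' *m I *m (Q *m I)).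
  rewrite !mulmxI_mulmxI // opprK; apply/eqP; rewrite eq_sym -addr_eq0 addrC.
  by rewrite QP'_anti.
have Y_pos u : u != 0 ->
    0 < bil G u (P' *m I *m u) + c / 2 * bil G u (Q *m I *m u).
  move=> u_neq0; rewrite -bilZr scalemxAl -bilDr -mulmxDl.
  have -> : P' *m I + (c / 2) *: (Q *m I) = (- kap) *: (- (P *m I)).
    by rewrite /P' mulmxBl -!scalemxAl subrK scalerN scaleNr opprK.
  by rewrite -scalemxAl bilZr pmulr_lgt0 ?oppr_gt0 // PI_pos.
have [e [e_neq0 Xe]] := selfadj_anticomm_scalar G_pos X_sym X_neq0 XX XY Y_pos.
exists (- e^-1); split; first by rewrite oppr_eq0 invr_eq0.
move: XI; rewrite Xe mul_scalar_mx => eI.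
by rewrite scaleNr -scalerN -eI scalerA mulVf // scale1r.
Qed.

Lemma isotropic_pair_core : int_isotropic_pair (I^T *m G) B.
Proof.
have [QQs|QQns] := boolP (is_scalar_mx (Qz *m Qz)); last first.
  apply: (isotropic_pair_of_nonscalar QQns); rewrite int_mxM.
  - exact: selfadj_mul.
  - exact: commI_mulmx.
  - by rewrite mulmxA; apply: antiselfadj_conj.
have [Q0|Qz_neq0] := eqVneq Qz 0; first exact: isotropic_pair_of_Q_eq0.
have [kap QQ] := is_scalar_mxP QQs.
have [KKs|KKns] := boolP (is_scalar_mx (Pz *m Qz + Qz *m Pz)); last first.
  apply: (isotropic_pair_of_nonscalar KKns); rewrite int_mxD !int_mxM.
  - exact: selfadj_anticomm.
  - by rewrite mulmxDr mulmxDl !commI_mulmx.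
  - rewrite mulmxDr !mulmxA -[Q *m Q]int_mxM QQ int_mx_scalar mul_scalar_mx.
    by apply: antiselfadjD; [apply: antiselfadj_conj | apply: antiselfadjZ].
have [c PQc] := is_scalar_mxP KKs.
have [e [e_neq0 ->]] : exists e, e != 0 /\ I = e *: Q.
  apply: (I_propto_Q (kap := kap%:~R) (c := c%:~R)).
  - by rewrite int_mx_eq0.
  - by rewrite -int_mxM QQ int_mx_scalar.
  - by rewrite -!int_mxM -int_mxD PQc int_mx_scalar.
apply: (isotropic_pair_of_proportional (A := Bz) (c1 := - (e * b)) (c2 := 1)).
  by rewrite linearZ /= -scalemxAl Q_anti GQ scalerN scalerA scaleNr.
by rewrite scale1r.
Qed.

End IsotropicPairCore.

Section IntegralReduction.
Variable R : realType.
Implicit Types (G A I X : 'M[R]_4).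

Lemma pos_def_unitmx G : (forall u, u != 0 -> 0 < bil G u u) -> G \in unitmx.
Proof.
move=> G_pos; rewrite unitmxE unitfE; apply/negP => /det0P [v v_neq0 vG].
by have := G_pos v^T; rewrite trmx_eq0 => /(_ v_neq0); rewrite /bil trmxK vG mul0mx mxE ltxx.
Qed.

Lemma antiselfadj_of_2form G A X c : G^T = G -> is_2form A -> G *m X = c *: A ->
  antiselfadj G X.
Proof.
by move=> G_sym A_2form GX; rewrite /antiselfadj -{1}G_sym -trmx_mul GX linearZ /= A_2form scalerN.
Qed.

Lemma commute_of_antiselfadj G A I X c : G \in unitmx ->
  antiselfadj G I -> antiselfadj A I -> G *m X = c *: A -> I *m X = X *m I.
Proof.
move=> G_unit GI AI GX; apply: (can_inj (mulKmx G_unit)).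
rewrite /= !mulmxA -[G *m I]opprK -GI mulNmx -[I^T *m G *m X]mulmxA GX -scalemxAr AI.
by rewrite scalerN opprK scalemxAl -GX.
Qed.

Lemma antiselfadj_scalel a G X : antiselfadj G X -> antiselfadj (a *: G) X.
Proof. by rewrite /antiselfadj -scalemxAr -scalemxAl => ->; rewrite scalerN. Qed.

Lemma kahler_form_2form G I : G^T = G -> antiselfadj G I -> is_2form (kahler_form G I).
Proof. by move=> G_sym GI; rewrite /is_2form /kahler_form trmx_mul trmxK G_sym GI opprK. Qed.

Lemma hodge20_zero_invariant I A : hodge20_zero I A ->
  forall u v, bil A (I *m u) (I *m v) = bil A u v.
Proof. by move=> A_11 u v; apply/eqP; rewrite eq_sym -subr_eq0; case: (A_11 u v) => ->. Qed.

Lemma invariant_antiselfadj A I : I *m I = - 1%:M ->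
  (forall u v, bil A (I *m u) (I *m v) = bil A u v) -> antiselfadj A I.
Proof.
move=> I2 A_inv.
have AII : I^T *m A *m I = A by apply: bil_inj => u v; rewrite -bil_mulmxr -bil_mulmxl.
by rewrite /antiselfadj -{2}AII -mulmxA I2 mulmxN mulmx1 opprK.
Qed.

Lemma rational_mx_int_multiple A : rational_mx A ->
  exists (Az : 'M[int]_4) (n : R), 0 < n /\ int_mx R Az = n *: A.
Proof.
move=> A_rat.
have q_ex i j : exists q : rat, A i j == ratr q.
  by have [q ->] := A_rat i j; exists q.
pose q i j := xchoose (q_ex i j).
have qE i j : A i j = ratr (q i j) by exact/eqP/(xchooseP (q_ex i j)).
pose N : int := \prod_(k : 'I_4 * 'I_4) denq (q k.1 k.2).
exists (\matrix_(i, j) (numq (q i j) * \prod_(k | k != (i, j)) denq (q k.1 k.2))), N%:~R.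
split; first by rewrite ltr0z prodr_gt0 // => k _; exact: denq_gt0.
apply/matrixP => i j.
have -> : N = denq (q i j) * \prod_(k | k != (i, j)) denq (q k.1 k.2).
  by rewrite /N (bigD1 (i, j)).
have den_neq0 : (denq (q i j))%:~R != 0 :> R by rewrite intr_eq0 denq_neq0.
by rewrite !mxE qE /ratr !rmorphM /=; field.
Qed.

Lemma isotropic_pair_of_int_forms (Gz Sz Bz : 'M[int]_4) I :
  (int_mx R Gz)^T = int_mx R Gz ->
  (forall u, u != 0 -> 0 < bil (int_mx R Gz) u u) ->
  is_2form (int_mx R Sz) -> is_2form (int_mx R Bz) -> I *m I = - 1%:M ->
  antiselfadj (int_mx R Gz) I -> antiselfadj (int_mx R Sz) I ->
  antiselfadj (int_mx R Bz) I ->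
  (forall u, u != 0 -> 0 < bil (int_mx R Sz) (I *m u) u) ->
  int_isotropic_pair (I^T *m int_mx R Gz) (int_mx R Bz).
Proof.
move=> G_sym G_pos S_2form B_2form I2 GI SI BI S_pos.
have G_unit := pos_def_unitmx G_pos.
pose d : R := (\det Gz)%:~R.
have d_neq0 : d != 0 by move: G_unit; rewrite unitmxE unitfE det_map_mx.
pose Pz := \det Gz *: (\adj Gz *m Sz); pose Qz := \adj Gz *m Bz.
have GP : int_mx R Gz *m int_mx R Pz = (d * d) *: int_mx R Sz.
  by rewrite -int_mxM -scalemxAr mulmxA mul_mx_adj mul_scalar_mx scalerA int_mxZ rmorphM.
have GQ : int_mx R Gz *m int_mx R Qz = d *: int_mx R Bz.
  by rewrite -int_mxM mulmxA mul_mx_adj mul_scalar_mx int_mxZ.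
apply: (isotropic_pair_core G_sym G_pos I2 GI _ _ _ _ _ GP GQ d_neq0).
- exact: antiselfadj_of_2form GP.
- exact: antiselfadj_of_2form GQ.
- exact: commute_of_antiselfadj G_unit GI SI GP.
- exact: commute_of_antiselfadj G_unit GI BI GQ.
- move=> u u_neq0; move: (S_pos u u_neq0); rewrite bil_mulmxl SI bilmxN => Su_pos.
  rewrite mulNmx bilNr bil_mulmxr mulmxA GP -scalemxAl bilmxZ -mulrN.
  by rewrite pmulr_rgt0 // lt0r mulf_neq0 //= -expr2 sqr_ge0.
Qed.

End IntegralReduction.

Theorem theorem4p6 (R : realType) (G B I : 'M[R]_4) :
  is_metric G -> is_2form B ->
  rational_mx G -> rational_mx B ->
  is_cplx_structure I -> compatible G I -> polarizable I ->
  hodge20_zero I B ->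
  exists F : 'M[int]_4,
    \det F \is a GRing.unit /\
    vanishes_on_span (kahler_form G I)
      (int_mx R (col 0 F)) (int_mx R (col 1 F)) /\
    vanishes_on_span B (int_mx R (col 0 F)) (int_mx R (col 1 F)).
Proof.
move=> [G_sym G_pos] B_2form G_rat B_rat I2 G_inv [S [S_2form [S_11 [_ S_pos]]]] B_11.
have GI : antiselfadj G I by apply: invariant_antiselfadj.
have BI : antiselfadj B I by apply/invariant_antiselfadj/hodge20_zero_invariant.
have [Gz [m [m_gt0 Gz_def]]] := rational_mx_int_multiple G_rat.
have [Bz [n [n_gt0 Bz_def]]] := rational_mx_int_multiple B_rat.
have pair : int_isotropic_pair (I^T *m int_mx R Gz) (int_mx R Bz).
  apply: (isotropic_pair_of_int_forms (Sz := S)) => //; rewrite ?Gz_def ?Bz_def.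
  - by rewrite linearZ /= G_sym.
  - by move=> u u_neq0; rewrite bilmxZ mulr_gt0 ?G_pos.
  - by rewrite /is_2form linearZ /= B_2form scalerN.
  - exact: antiselfadj_scalel.
  - by apply/invariant_antiselfadj/hodge20_zero_invariant.
  - exact: antiselfadj_scalel.
apply: primitive_plane_of_isotropic_pair => //; first exact: kahler_form_2form.
apply: (int_isotropic_pairZ (a := m) (b := n)); rewrite ?gt_eqF //.
by rewrite /kahler_form scalemxAr -Gz_def -Bz_def.
Qed.
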